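(* Let $G=A(n,\theta)$ with $n\ge3$ odd. No element of order $4$ in $G$ is conjugate to its inverse, and $G$ has exactly $2(2^n-1)$ conjugacy classes of elements of order $4$.
   Context: Let $n=2m+1$ be odd, $\mathbb{F}_{2^n}$ the field with $2^n$ elements, $\theta$ a generator of $\mathrm{Gal}(\mathbb{F}_{2^n}/\mathbb{F}_2)$, $a^\theta$ the image of $a$ under $\theta$. $G=A(n,\theta)$ is the group of matrices $\begin{bmatrix}1&a&b\\0&1&a^\theta\\0&0&1\end{bmatrix}$, $a,b\in\mathbb{F}_{2^n}$, denoted $(a,b)$, with $(a,b)(c,d)=(a+c,\,b+d+ac^\theta)$. *)

From HB Require Import structures.
From mathcomp Require Import all_boot all_order all_algebra all_fingroup all_field.
Set Implicit Arguments. Unset Strict Implicit. Unset Printing Implicit Defensive.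
Import GRing.Theory.
Local Open Scope ring_scope.

(* The 3x3 matrix [1 a b; 0 1 a^theta; 0 0 1], denoted (a,b) in the paper. *)
Definition A_mx (F : finFieldType) (theta : F -> F) (a b : F) : 'M[F]_3 :=
  \matrix_(i < 3, j < 3)
    if i == j then 1
    else if ((i : nat) == 0%N) && ((j : nat) == 1%N) then a
    else if ((i : nat) == 0%N) && ((j : nat) == 2%N) then b
    else if ((i : nat) == 1%N) && ((j : nat) == 2%N) then theta a
    else 0.

Definition A_grp (F : finFieldType) (theta : F -> F) : {set {'GL_3[F]}} :=
  [set g : {'GL_3[F]} | [exists a : F, exists b : F, GLval g == A_mx theta a b]].

(* theta generates Gal(F/F_2) (a cyclic group of order n): theta has order n. *)
Definition gal_generator (F : finFieldType) (n : nat) (theta : F -> F) : Prop :=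
  (forall x, iter n theta x = x) /\
  (forall k, (0 < k < n)%N -> exists x, iter k theta x != x).

From mathcomp Require Import all_boot all_order all_algebra all_fingroup all_solvable all_field.
From mathcomp Require Import ring.
Set Implicit Arguments. Unset Strict Implicit. Unset Printing Implicit Defensive.
Import GRing.Theory.
Local Open Scope ring_scope.

(* Write (a, b) for the element of A(n, theta) with entries a and b; it has order 4 iff
   a != 0.  Conjugating (a, b) by (c, d) gives (a, b + a theta(c) + c theta(a)) while
   (a, b)^-1 = (a, b + a theta(a)), so (a, b) is conjugate to its inverse only if
   theta(u) + u = 1 for u = c / a; iterating theta an odd number n of times rules this
   out.  The centralizer of (a, b), a != 0, consists of the (c, d) with c / a fixed by
   theta, i.e. c / a in F_2, so each class of elements of order 4 has 2^(n-1) elements,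
   and the (2^n - 1) 2^n elements of order 4 fall into 2 (2^n - 1) classes. *)

Lemma expr2_eq_id (F : idomainType) (c : F) : c ^+ 2 = c -> c = 0 \/ c = 1.
Proof.
move=> c2; have : c * (c - 1) == 0 by rewrite mulrBr mulr1 -expr2 c2 subrr.
by rewrite mulf_eq0 subr_eq0 => /orP[] /eqP; [left | right].
Qed.

Lemma expf_card_expn (F : finFieldType) (x : F) m : x ^+ (#|F| ^ m) = x.
Proof. by elim: m => [|m IH]; rewrite ?expr1 // expnSr exprM IH expf_card. Qed.

Lemma finField_prim_elt (F : finFieldType) :
  exists z : F, forall x : F, x != 0 -> exists m, x = z ^+ m.
Proof.
have q_gt0 : (0 < #|F|.-1)%N by rewrite -subn1 subn_gt0 finNzRing_gt1.
set q := #|F|.-1.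
have unity_q (x : F) : x != 0 -> x ^+ q = 1.
  move=> x_nz; apply: (mulfI x_nz); rewrite mulr1 -exprS prednK ?expf_card //.
  exact: ltnW (finNzRing_gt1 F).
have all_unity : all q.-unity_root (enum [set~ (0 : F)]).
  by apply/allP=> x; rewrite mem_enum in_setC1 unity_rootE => /unity_q ->.
have size_enum : (q <= size (enum [set~ 0%R : F]))%N by rewrite -cardE cardsC1.
have /hasP[z _ z_prim] := has_prim_root q_gt0 all_unity (enum_uniq _) size_enum.
by exists z => x /unity_q /(prim_rootP z_prim)[i ->]; exists i.
Qed.

Lemma card_expn_gt0 (R : finNzRingType) p n : #|R| = (p ^ n)%N -> (0 < n)%N.
Proof. by case: n => // card1; have := finNzRing_gt1 R; rewrite card1. Qed.

Section FrobeniusPower.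

Variables (F : finFieldType) (n : nat) (theta : {rmorphism F -> F}).
Hypothesis cardF : #|F| = (2 ^ n)%N.

Let n_gt0 : (0 < n)%N := card_expn_gt0 cardF.

Let pchar2 : 2 \in [pchar F] := card_finPcharP cardF isT.

(* For a generator z of F^*, the coefficients of prod_(i < n) ('X - z^(2^i)) are
   Frobenius-invariant, hence in F_2 and fixed by theta; so theta z is a root. *)
Lemma rmorph_expn2 : exists i, forall x, theta x = x ^+ (2 ^ i).
Proof.
have [z z_gen] := finField_prim_elt F.
pose h (i : nat) : {poly F} := 'X - (z ^+ (2 ^ i))%:P.
pose P := \prod_(i < n) h i.
have P_frob : map_poly (pFrobenius_aut pchar2) P = P.
  have h_frob k : map_poly (pFrobenius_aut pchar2) (h k) = h k.+1.
    rewrite map_polyXsubC /h expnSr exprM; congr (_ - _%:P); exact: pFrobenius_autE.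
  rewrite rmorph_prod (eq_bigr (fun k : 'I_n => h k.+1)) => [|k _]; last exact: h_frob.
  have n_eq : n = n.-1.+1 by rewrite prednK.
  rewrite /P n_eq big_ord_recr big_ord_recl /= mulrC /h -n_eq -cardF expf_card.
  by rewrite expn0 expr1.
have theta_P : map_poly theta P = P.
  apply: map_poly_id => c /(nth_index 0); set k := index c P => <-.
  have : (map_poly (pFrobenius_aut pchar2) P)`_k = P`_k by rewrite P_frob.
  by rewrite coef_map /= pFrobenius_autE => /expr2_eq_id[->|->]; rewrite ?rmorph0 ?rmorph1.
have P_z : P.[z] = 0.
  rewrite horner_prod; apply/eqP/prodf_eq0; exists (Ordinal n_gt0) => //.
  by rewrite !hornerE expr1 subrr.
have : P.[theta z] = 0 by rewrite -theta_P horner_map P_z rmorph0.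
rewrite horner_prod => /eqP/prodf_eq0[i _]; rewrite !hornerE subr_eq0 => /eqP theta_z.
exists i => x; have [->|/z_gen[m ->]] := eqVneq x 0.
  by rewrite rmorph0 expr0n expn_eq0.
by rewrite rmorphXn theta_z exprAC.
Qed.

Lemma coprime_rmorph_expn2 i : gal_generator n theta ->
  (forall x, theta x = x ^+ (2 ^ i)) -> coprime i n.
Proof.
move=> [_ theta_ord] theta_exp.
have iter_theta k x : iter k theta x = x ^+ (2 ^ (i * k)).
  elim: k => [|k IH]; first by rewrite muln0 expr1.
  by rewrite iterS IH theta_exp -exprM -expnD mulnS addnC.
have d_gt0 : (0 < gcdn i n)%N by rewrite gcdn_gt0 n_gt0 orbT.
(* Otherwise theta^(n / gcd(i, n)) would already be the identity. *)
apply: contraT; rewrite /coprime neq_ltn ltnNge d_gt0 /= => d_gt1.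
have [|x] := theta_ord (n %/ gcdn i n)%N.
  by rewrite divn_gt0 // dvdn_leq ?dvdn_gcdr //= ltn_Pdiv.
by rewrite iter_theta muln_divCA ?dvdn_gcdl ?dvdn_gcdr // expnM -cardF expf_card_expn eqxx.
Qed.

Lemma gal_generator_fixed u : gal_generator n theta -> theta u = u -> u = 0 \/ u = 1.
Proof.
move=> gen theta_u; have [i theta_exp] := rmorph_expn2.
have /eqP gcd_i_n := coprime_rmorph_expn2 gen theta_exp.
have [a _] := Bezoutl i n_gt0; rewrite gcdnC gcd_i_n => n_dvd.
have u_fix k : u ^+ (2 ^ (i * k)) = u.
  elim: k => [|k IH]; first by rewrite muln0 expr1.
  by rewrite mulnS expnD exprM -theta_exp theta_u IH.
apply: expr2_eq_id; have := expf_card_expn u ((1 + a * i) %/ n).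
by rewrite cardF -expnM mulnC divnK // expnD expn1 exprM exprAC mulnC u_fix.
Qed.

End FrobeniusPower.

Lemma rmorph_add_id_neq1 (F : fieldType) (theta : {rmorphism F -> F}) n u :
  2 \in [pchar F] -> (forall x, iter n theta x = x) -> odd n -> theta u + u != 1.
Proof.
move=> pchar2 theta_n n_odd; apply/eqP => theta_u.
have theta_uE : theta u = 1 + u by rewrite -theta_u -addrA addrr_pchar2 // addr0.
have iter_u k : iter k theta u = u + (odd k)%:R.
  elim: k => [|k IH]; first by rewrite addr0.
  rewrite iterS IH rmorphD rmorph_nat theta_uE /=; case: (odd k) => /=.
    by rewrite addr0 addrC addrA addrr_pchar2 // add0r.
  by rewrite !addr0 addrC.
have := iter_u n; rewrite theta_n n_odd => /(congr1 (fun t => t - u)).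
by rewrite subrr addrC addKr => /esym/eqP; rewrite oner_eq0.
Qed.

Section GroupA.

Variables (F : finFieldType) (theta : {rmorphism F -> F}).

Lemma A_mxM a b c d :
  A_mx theta a b *m A_mx theta c d = A_mx theta (a + c) (b + d + a * theta c).
Proof.
apply/matrixP=> i j; rewrite !mxE !big_ord_recl big_ord0 !mxE.
case: i => [[|[|[|i]]] Hi] //; case: j => [[|[|[|j]]] Hj] //=;
  rewrite /bump /= ?mxE /= ?rmorphD; ring.
Qed.

Lemma A_mx0 : A_mx theta 0 0 = 1%:M.
Proof.
apply/matrixP=> i j; rewrite !mxE.
by case: i => [[|[|[|i]]] Hi] //; case: j => [[|[|[|j]]] Hj] //=; rewrite ?rmorph0.
Qed.

Lemma A_grp_group_set : group_set (A_grp theta).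
Proof.
apply/group_setP; split.
  by rewrite inE; apply/existsP; exists 0; apply/existsP; exists 0; rewrite GL_1E A_mx0.
move=> x y; rewrite !inE => /existsP[a /existsP[b /eqP xE]] /existsP[c /existsP[d /eqP yE]].
by apply/existsP; exists (a + c); apply/existsP; exists (b + d + a * theta c);
  rewrite GL_MxE xE yE A_mxM.
Qed.

Canonical A_group := Group A_grp_group_set.

Hypothesis pchar2 : 2 \in [pchar F].

Lemma A_mx_unit a b : A_mx theta a b \in unitmx.
Proof.
have inv : A_mx theta a b *m A_mx theta a (b + a * theta a) = 1%:M.
  by rewrite A_mxM addrr_pchar2 // addrA addrr_pchar2 // add0r addrr_pchar2 // A_mx0.
by case: (mulmx1_unit inv).
Qed.

Definition Agl (p : F * F) : {'GL_3[F]} := insubd (1%g : {'GL_3[F]}) (A_mx theta p.1 p.2).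

Lemma AglE p : GLval (Agl p) = A_mx theta p.1 p.2.
Proof. exact/insubdK/A_mx_unit. Qed.

Lemma Agl_of_GLval (u : {'GL_3[F]}) a b : GLval u = A_mx theta a b -> u = Agl (a, b).
Proof. by move=> uE; apply: val_inj; rewrite [RHS]AglE. Qed.

Lemma Agl_inj : injective Agl.
Proof.
move=> [a b] [c d] /(congr1 GLval); rewrite !AglE /= => /matrixP eq_mx.
by have := eq_mx 0 1; have := eq_mx 0 2; rewrite !mxE /= => -> ->.
Qed.

Lemma A_grpE : A_grp theta = Agl @: setT.
Proof.
apply/setP=> x; rewrite inE; apply/existsP/imsetP => [[a /existsP[b /eqP xE]] | [[a b] _ ->]].
  by exists (a, b) => //; apply: Agl_of_GLval.
by exists a; apply/existsP; exists b; rewrite AglE.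
Qed.

Lemma AglM a b c d : (Agl (a, b) * Agl (c, d))%g = Agl (a + c, b + d + a * theta c).
Proof. by apply: Agl_of_GLval; rewrite GL_MxE !AglE A_mxM. Qed.

Lemma Agl0 : Agl (0, 0) = 1%g.
Proof. by apply/esym/Agl_of_GLval; rewrite GL_1E A_mx0. Qed.

Lemma AglV a b : (Agl (a, b))^-1%g = Agl (a, b + a * theta a).
Proof.
apply/eqP; rewrite eq_invg_mul AglM addrr_pchar2 // addrA addrr_pchar2 // add0r.
by rewrite addrr_pchar2 // Agl0.
Qed.

Lemma AglJ a b c d :
  (Agl (a, b) ^ Agl (c, d))%g = Agl (a, b + a * theta c + c * theta a).
Proof.
apply: (mulgI (Agl (c, d))); rewrite -conjgC !AglM; congr (Agl (_, _)); first exact: addrC.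
by rewrite -[LHS]addr0 -(addrr_pchar2 pchar2 (c * theta a)); ring.
Qed.

Lemma Agl_expg2 a b : (Agl (a, b) ^+ 2)%g = Agl (0, a * theta a).
Proof. by rewrite expgS expg1 AglM !addrr_pchar2 // add0r. Qed.

Lemma order_Agl a b : (#[Agl (a, b)]%g == 4%N) = (a != 0).
Proof.
set x := Agl (a, b).
have x4 : (#[x]%g %| 4)%N by rewrite order_dvdn (expgM x 2 2) !Agl_expg2 mul0r Agl0.
have x2 : (#[x]%g %| 2)%N = (a == 0).
  by rewrite order_dvdn Agl_expg2 -Agl0 (inj_eq Agl_inj) xpair_eqE eqxx mulf_eq0 fmorph_eq0 orbb.
rewrite -x2; move: (order_gt0 x) x4 (dvdn_leq (isT : 0 < 4)%N x4).
by case: #[x]%g => [|[|[|[|[|k]]]]].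
Qed.

Lemma cent1_Agl a b c d :
  (Agl (c, d) \in 'C[Agl (a, b)])%g = (c * theta a == a * theta c).
Proof.
rewrite cent1E !AglM (inj_eq Agl_inj) xpair_eqE addrC eqxx /=.
by rewrite (addrC d) (inj_eq (addrI _)).
Qed.

End GroupA.

Lemma card_classes_const_size (gT : finGroupType) (G : {group gT}) (S : {set gT}) k :
  S \subset G -> {in S & G, forall x y, (x ^ y)%g \in S} ->
  {in S, forall x, #|(x ^: G)%g| = k} ->
  (#|[set (x ^: G)%g | x in S]| * k)%N = #|S|.
Proof.
move=> sSG S_conj S_card.
have S_part : partition [set (x ^: G)%g | x in S] S.
  apply/and3P; split.
  - apply/eqP/setP=> y; apply/bigcupP/idP => [[_ /imsetP[x xS ->] /imsetP[z zG ->]] | yS].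
      exact: S_conj.
    by exists (y ^: G)%g; [exact: imset_f | exact: class_refl].
  - exact: trivIsetS (imsetS _ sSG) (partition_trivIset (classes_partition G)).
  - by apply/imsetP=> -[x _ x0]; have := class_refl G x; rewrite -x0 inE.
rewrite (card_partition S_part) (eq_bigr (fun=> k)) ?sum_nat_const //.
by move=> _ /imsetP[x xS ->]; exact: S_card.
Qed.

Section Order4Classes.

Variables (F : finFieldType) (n : nat) (theta : {rmorphism F -> F}).
Hypotheses (n_odd : odd n) (cardF : #|F| = (2 ^ n)%N) (gen : gal_generator n theta).

Let pchar2 : 2 \in [pchar F] := card_finPcharP cardF isT.

Let n_gt0 : (0 < n)%N := card_expn_gt0 cardF.

Lemma card_A_grp : #|A_grp theta| = (2 ^ n * 2 ^ n)%N.
Proof. by rewrite (A_grpE theta pchar2) card_imset ?cardsT ?card_prod ?cardF //; exact: Agl_inj. Qed.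

Lemma order4_A_grpE :
  [set x in A_grp theta | #[x]%g == 4%N] = Agl theta @: setX [set~ 0] setT.
Proof.
apply/setP=> x; rewrite inE (A_grpE theta pchar2).
apply/andP/imsetP => [[/imsetP[[a b] _ ->]] | [[a b]]].
  by rewrite order_Agl // => a_nz; exists (a, b); rewrite // !inE a_nz.
by rewrite !inE andbT => a_nz ->; rewrite imset_f ?inE // order_Agl.
Qed.

Lemma cent1_A_grpE a b : a != 0 ->
  'C_(A_grp theta)[Agl theta (a, b)]%g = Agl theta @: setX [set 0; a] setT.
Proof.
move=> a_nz; apply/setP=> y; rewrite inE (A_grpE theta pchar2).
apply/andP/imsetP => [[/imsetP[[c d] _ ->]] | [[c d]]].
  rewrite cent1_Agl // => /eqP c_comm; exists (c, d) => //; rewrite !inE andbT.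
  have [-> // | c_nz] := eqVneq c 0.
  have theta_ca : theta (c / a) = c / a.
    by rewrite fmorph_div; apply/eqP; rewrite eqr_div ?fmorph_eq0 // c_comm mulrC.
  have [/eqP | /divr1_eq ->] := gal_generator_fixed cardF gen theta_ca; last by rewrite eqxx orbT.
  by rewrite mulf_eq0 invr_eq0 (negbTE a_nz) (negbTE c_nz).
move=> c_0a ->; split; first exact: imset_f.
move: c_0a; rewrite cent1_Agl // !inE andbT /=.
by case/orP=> /eqP ->; rewrite ?rmorph0 ?mulr0 ?mul0r.
Qed.

Lemma card_class_order4 x :
  x \in A_grp theta -> #[x]%g = 4%N -> #|(x ^: A_grp theta)%g| = (2 ^ n.-1)%N.
Proof.
rewrite (A_grpE theta pchar2) => /imsetP[[a b] _ ->] /eqP; rewrite order_Agl // => a_nz.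
have card_cent : #|'C_(A_grp theta)[Agl theta (a, b)]%g| = (2 * 2 ^ n)%N.
  rewrite cent1_A_grpE // card_imset; last exact: Agl_inj.
  by rewrite cardsX cards2 eq_sym a_nz cardsT cardF.
have := Lagrange (subsetIl (A_group theta) 'C[Agl theta (a, b)]%g).
rewrite index_cent1 card_cent /= -(A_grpE theta pchar2) card_A_grp.
rewrite [(2 * _)%N]mulnC -mulnA => /eqP; rewrite eqn_pmul2l ?expn_gt0 //.
by rewrite -[in X in _ == X](prednK n_gt0) expnS eqn_pmul2l // => /eqP.
Qed.

Lemma card_order4 : #|[set x in A_grp theta | #[x]%g == 4%N]| = ((2 ^ n - 1) * 2 ^ n)%N.
Proof.
rewrite order4_A_grpE card_imset; last exact: Agl_inj.
by rewrite cardsX cardsC1 cardsT cardF subn1.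
Qed.

Lemma order4_inv_notin_class x :
  x \in A_grp theta -> #[x]%g = 4%N -> (x^-1)%g \notin (x ^: A_grp theta)%g.
Proof.
rewrite {1}(A_grpE theta pchar2) => /imsetP[[a b] _ ->] /eqP; rewrite order_Agl // => a_nz.
rewrite (AglV theta pchar2) (A_grpE theta pchar2); apply/imsetP => -[_ /imsetP[[c d] _ ->]].
rewrite (AglJ theta pchar2) => /(Agl_inj pchar2) [] /eqP.
rewrite -addrA (inj_eq (addrI b)) => /eqP conj_eq.
have tha_nz : theta a != 0 by rewrite fmorph_eq0.
have : theta (c / a) + c / a = 1.
  apply: (mulfI (mulf_neq0 a_nz tha_nz)); rewrite mulr1 [RHS]conj_eq fmorph_div.
  by field; rewrite a_nz tha_nz.
by move/eqP; rewrite (negbTE (rmorph_add_id_neq1 _ pchar2 gen.1 n_odd)).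
Qed.

End Order4Classes.

Theorem lemma3p1 (F : finFieldType) (n : nat) (theta : {rmorphism F -> F}) :
  odd n -> (3 <= n)%N -> #|F| = (2 ^ n)%N -> gal_generator n theta ->
  (forall x, x \in A_grp theta -> #[x]%g = 4%N -> (x^-1)%g \notin (x ^: A_grp theta)%g) /\
  #|[set (x ^: A_grp theta)%g | x in A_grp theta & #[x]%g == 4%N]| = (2 * (2 ^ n - 1))%N.
Proof.
move=> n_odd _ cardF gen; split; first exact: order4_inv_notin_class n_odd cardF gen.
set S := [set x in A_grp theta | #[x]%g == 4%N].
have sSA : S \subset A_grp theta by apply/subsetP=> x /setIdP[].
have S_conj : {in S & A_grp theta, forall x y, (x ^ y)%g \in S}.
  by move=> x y /setIdP[xA x4] yA; apply/setIdP; rewrite groupJ ?orderJ.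
have S_card : {in S, forall x, #|(x ^: A_grp theta)%g| = (2 ^ n.-1)%N}.
  move=> x /setIdP[xA /eqP x4]; exact (card_class_order4 cardF gen xA x4).
have := card_classes_const_size sSA S_conj S_card.
rewrite (card_order4 _ cardF) -[in X in (_ = _ * X)%N -> _](prednK (odd_gt0 n_odd)) expnS mulnA.
by move=> /eqP; rewrite eqn_pmul2r ?expn_gt0 // mulnC => /eqP.
Qed.
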